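(* Let $M/K$ be a finite extension of fields and $G$ a finite group. Then the following are equivalent: (a) there is a central division $K$-algebra $D_0$ which has a maximal subfield $L_0$ that is a $G$-extension of $K$, such that $D=D_0\otimes_K M$ is a division algebra which has a maximal subfield $L$ that is a $G$-extension of $M$ (no relation between $L$ and $L_0$ being assumed); (b) condition (6) holds: there is a central division algebra $D_0$ over $K$ with a maximal subfield $L_0$ which is a $G$-extension of $K$, such that $L_0\cap M=K$, $D=D_0\otimes_K M$ is a division algebra, and $L_0M$ is a maximal subfield of $D$.
   Context: For a field $F$ and finite group $G$, a $G$-extension of $F$ is a Galois extension $L/F$ with $\mathrm{Gal}(L/F)\cong G$. A maximal subfield of a central division algebra of index $n$ over $F$ is a subfield of degree $n$ over $F$. *)

From HB Require Import structures.
From mathcomp Require Import all_boot all_order all_algebra all_fingroup all_solvable all_field.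
Set Implicit Arguments. Unset Strict Implicit. Unset Printing Implicit Defensive.
Import GRing.Theory.
Local Open Scope ring_scope.

Definition is_division_alg (K : fieldType) (D : falgType K) : Prop :=
  forall x : D, x != 0 -> x \is a GRing.unit.

Definition is_central_division_alg (K : fieldType) (D : falgType K) : Prop :=
  ('Z({:D})%VS == 1%VS) /\ is_division_alg D.

Definition is_G_extension (K : fieldType) (L : splittingFieldType K)
    (G : finGroupType) : Prop :=
  galois 1%VS {:L}%VS /\ ('Gal({:L}%VS / 1%VS) \isog [set: G])%g.

(* The field L, embedded in D by the K-algebra morphism iota, is a maximal
   subfield of D, i.e. [L:K] = index of D, (index)^2 = dim_K D. *)
Definition is_maximal_subfield (K : fieldType) (L : fieldExtType K)
    (D : falgType K) (iota : {lrmorphism L -> D}) : Prop :=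
  ((\dim {:L}%VS) ^ 2)%N = \dim {:D}%VS.

(* D (an M-algebra) together with phi : D0 -> D is the scalar extension
   D0 (x)_K M: phi is a K-linear ring morphism carrying a K-basis of D0 to
   an M-basis of D (so the induced map D0 (x)_K M -> D is an isomorphism
   of M-algebras). *)
Definition is_scalar_extension (K : fieldType) (M : fieldExtType K)
    (D0 : falgType K) (D : falgType M) (phi : {rmorphism D0 -> D}) : Prop :=
  (forall (k : K) (x : D0), phi (k *: x) = (k%:A : M) *: phi x) /\
  basis_of {:D}%VS (map phi (vbasis {:D0}%VS)).

From HB Require Import structures.
From mathcomp Require Import all_boot all_order all_algebra all_fingroup.
From mathcomp Require Import all_solvable all_field.
Set Implicit Arguments. Unset Strict Implicit. Unset Printing Implicit Defensive.
Import GRing.Theory.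
Local Open Scope ring_scope.

(* Both
   directions rest on the compositum E = L0 M, the M-span of the image of L0
   in D.
   - Since phi sends a K-basis of D0 to an M-basis of D, K-free families of D0
     stay M-free in D (scalar_ext_free); hence E is a commutative subalgebra
     of D with dim_M E = [L0 : K], and it is a field because D is a division
     algebra (comm_subfield, compositum_field).
   - (a) -> (b): (dim_M E)^2 = [L0 : K]^2 = dim_K D0 = dim_M D, and
     L0 /\ M = K inside the field E: 1 and any x in L0 \ K are K-free, hence
     their images are M-free (compositum_disjoint).
   - (b) -> (a): E is generated over M by roots of the images of the minimal
     polynomials of L0/K, so it is a splitting field over M
     (compositum_splitting); each sigma in Gal(L0/K) extends M-linearly to an
     automorphism of E (gal_ext), giving an injective morphism
     Gal(L0/K) -> Gal(E/M).  As #|Gal(E/M)| <= [E : M] = [L0 : K], it is an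
     isomorphism, and E/M is Galois by the general criterion galois_of_card;
     so E is a maximal subfield of D which is a G-extension of M. *)

Section CommutativeSubalgebraField.
Variables (F : fieldType) (A : falgType F) (E : {aspace A}).

(* A commutative subalgebra E of a division algebra A is a field extension of
   F; the two hypotheses are arguments of the type so that its field instances
   may depend on them. *)
Definition comm_subfield of {in E &, forall u v : A, u * v = v * u}
  & is_division_alg A : Type := subvs_of E.

Variables (E_comm : {in E &, forall u v : A, u * v = v * u})
  (A_div : is_division_alg A).
Local Notation T := (comm_subfield E_comm A_div).

HB.instance Definition _ := Falgebra.on T.

Fact comm_subfield_mulC : @commutative T T *%R.
Proof. by move=> x y; apply/val_inj/E_comm; apply: subvsP. Qed.
HB.instance Definition _ :=
  GRing.PzRing_hasCommutativeMul.Build T comm_subfield_mulC.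

Fact comm_subfield_field : GRing.field_axiom T.
Proof.
move=> x x_neq0; apply: vsval_unitr; apply: A_div.
by apply: contra x_neq0 => /eqP x0; apply/eqP/val_inj.
Qed.
HB.instance Definition _ := GRing.ComUnitRing_isField.Build T comm_subfield_field.
End CommutativeSubalgebraField.

Lemma inj_linear_free (F : fieldType) (U V : vectType F) (f : {linear U -> V})
    (s : seq U) :
  injective f -> free s -> free (map f s).
Proof.
move=> f_inj free_s; have free_t : free (in_tuple s) by [].
suff : free (map_tuple f (in_tuple s)) by [].
apply/freeP => m Hm j; move/freeP: free_t; apply.
apply: f_inj; rewrite linear0 linear_sum /= -{}[RHS]Hm.
by apply: eq_bigr => i _; rewrite linearZ /= (nth_map 0) // size_tuple.
Qed.

Section ScalarExtension.
Variables (K : fieldType) (M : fieldExtType K) (D0 : falgType K) (D : falgType M)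
  (phi : {rmorphism D0 -> D}).
Hypothesis phiK : forall (k : K) (x : D0), phi (k *: x) = (k%:A : M) *: phi x.
Hypothesis phiB : basis_of {:D}%VS (map phi (vbasis {:D0}%VS)).

Let b := vbasis {:D0}%VS.
Let N := \dim {:D0}%VS.

Lemma scalar_ext_coord (x : D0) :
  phi x = \sum_(i < N) (coord b i x)%:A *: phi b`_i.
Proof.
rewrite {1}(coord_vbasis (memvf x)) rmorph_sum; apply: eq_bigr => i _.
by rewrite phiK.
Qed.

(* If r is M-free and sum_l r_l phi(w_l) = 0, then all w_l vanish: expanding
   the w_l in the K-basis b reduces this to the M-freeness of phi(b). *)
Lemma scalar_ext_indep q (r : q.-tuple M) (w : 'I_q -> D0) :
  free r -> \sum_(l < q) r`_l *: phi (w l) = 0 -> forall l, w l = 0.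
Proof.
move=> /freeP free_r sum0.
have /freeP free_phib : free (map_tuple phi b) by exact: (basis_free phiB).
have coord0 : \sum_(i < N) (\sum_(l < q) coord b i (w l) *: r`_l)
                  *: (map_tuple phi b)`_i = 0.
  rewrite -{}[RHS]sum0.
  transitivity (\sum_(l < q) \sum_(i < N)
                  (r`_l * (coord b i (w l))%:A) *: phi b`_i).
    rewrite exchange_big /=; apply: eq_bigr => i _.
    rewrite scaler_suml (nth_map 0) ?size_tuple //; apply: eq_bigr => l _.
    by rewrite mulr_algr.
  apply: eq_bigr => l _; rewrite (scalar_ext_coord (w l)) scaler_sumr.
  by apply: eq_bigr => i _; rewrite scalerA.
move=> l; rewrite (coord_vbasis (memvf (w l))); apply: big1 => i _.
by rewrite (free_r (fun l => coord b i (w l)) (free_phib _ coord0 i)) scale0r.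
Qed.

(* Writing the coefficients m_j in a K-basis e of M, a relation
   sum_j m_j phi(s_j) = 0 becomes sum_l e_l phi(w_l) = 0 with w_l K-linear
   combinations of the s_j, so scalar_ext_indep applies. *)
Lemma scalar_ext_free (s : seq D0) : free s -> free (map phi s).
Proof.
move=> free_s; have /freeP free_t : free (in_tuple s) by [].
suff : free (map_tuple phi (in_tuple s)) by [].
apply/freeP => m Hm j; set n := size s in m Hm j *.
pose e := vbasis {:M}%VS; pose a (k : 'I_n) l := coord e l (m k).
pose w l := \sum_(k < n) a k l *: s`_k.
have w0 : forall l, w l = 0.
  apply: (scalar_ext_indep (basis_free (vbasisP _))).
  rewrite -{}[RHS]Hm.
  transitivity (\sum_(l < \dim {:M}%VS) \sum_(k < n)
                  (e`_l * (a k l)%:A) *: phi s`_k).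
    apply: eq_bigr => l _; rewrite /w rmorph_sum scaler_sumr.
    by apply: eq_bigr => k _; rewrite phiK scalerA.
  rewrite exchange_big /=; apply: eq_bigr => k _.
  rewrite (nth_map 0) ?size_tuple // -scaler_suml; congr (_ *: _).
  rewrite [RHS](coord_vbasis (memvf (m k))); apply: eq_bigr => l _.
  by rewrite mulr_algr.
rewrite (coord_vbasis (memvf (m j))); apply: big1 => l _.
by rewrite -/e -/(a j l) (free_t (fun k => a k l) (w0 l) j) scale0r.
Qed.

Lemma dim_scalar_ext : \dim {:D}%VS = \dim {:D0}%VS.
Proof.
by rewrite -(span_basis phiB) (eqnP (basis_free phiB)) size_map size_tuple.
Qed.
End ScalarExtension.

Section Compositum.
Variables (K : fieldType) (M : fieldExtType K) (D0 : falgType K)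
  (L0 : fieldExtType K) (iota0 : {lrmorphism L0 -> D0})
  (D : falgType M) (phi : {rmorphism D0 -> D}).
Hypothesis phiK : forall (k : K) (x : D0), phi (k *: x) = (k%:A : M) *: phi x.

(* The K-algebra map L0 -> D0 -> D; it is only K-semilinear into the M-space D. *)
Local Notation emb x := (phi (iota0 x)).
Let b0 := vbasis {:L0}%VS.
Let n0 := \dim {:L0}%VS.

Definition compositum : {vspace D} := <<map (fun x => emb x) b0>>%VS.

Lemma emb_scale (k : K) x : emb (k *: x) = (k%:A : M) *: emb x.
Proof. by rewrite linearZ /= phiK. Qed.

Lemma emb_in_compositum x : emb x \in compositum.
Proof.
rewrite (coord_vbasis (memvf x)) linear_sum rmorph_sum; apply: memv_suml => i _.
rewrite emb_scale; apply/memvZ/memv_span/map_f/mem_nth.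
by rewrite size_tuple.
Qed.

Lemma compositum_coord u : u \in compositum ->
  u = \sum_(i < n0) coord (map_tuple (fun x => emb x) b0) i u *: emb b0`_i.
Proof.
move=> Eu; rewrite {1}(@coord_span _ _ _ (map_tuple (fun x => emb x) b0) u Eu).
by apply: eq_bigr => i _; rewrite (nth_map 0) ?size_tuple.
Qed.

Lemma compositum_mul u v :
  u \in compositum -> v \in compositum -> u * v \in compositum.
Proof.
move=> /compositum_coord -> /compositum_coord ->; rewrite mulr_suml.
apply: memv_suml => i _; rewrite mulr_sumr; apply: memv_suml => j _.
by rewrite -scalerAl -scalerAr -!rmorphM; apply/memvZ/memvZ/emb_in_compositum.
Qed.

Lemma compositum_is_aspace : is_aspace compositum.
Proof.
rewrite /is_aspace has_algid1; first by apply/prodvP; apply: compositum_mul.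
by rewrite -(rmorph1 phi) -(rmorph1 iota0) emb_in_compositum.
Qed.

Lemma emb_comm x v : v \in compositum -> emb x * v = v * emb x.
Proof.
move=> /compositum_coord ->; rewrite mulr_suml mulr_sumr; apply: eq_bigr => j _.
by rewrite -scalerAl -scalerAr -!rmorphM mulrC.
Qed.

Lemma compositum_comm : {in compositum &, forall u v : D, u * v = v * u}.
Proof.
move=> u v /compositum_coord -> Ev; rewrite mulr_suml mulr_sumr.
by apply: eq_bigr => j _; rewrite -scalerAl -scalerAr emb_comm.
Qed.

Hypothesis phiB : basis_of {:D}%VS (map phi (vbasis {:D0}%VS)).

Lemma emb_free (s : seq L0) : free s -> free (map (fun x => emb x) s).
Proof.
move=> free_s; rewrite (map_comp phi iota0).
exact/(scalar_ext_free phiK phiB)/inj_linear_free/free_s/fmorph_inj.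
Qed.

Lemma compositum_basis_free : free (map (fun x => emb x) b0).
Proof. exact/emb_free/(basis_free (vbasisP _)). Qed.

Lemma dim_compositum : \dim compositum = n0.
Proof. by rewrite (eqnP compositum_basis_free) size_map size_tuple. Qed.

Hypothesis D_div : is_division_alg D.

Definition compositum_aspace : {aspace D} := ASpace compositum_is_aspace.

Definition compositum_field : Type :=
  comm_subfield (compositum_comm : {in compositum_aspace &, _}) D_div.
HB.instance Definition _ := GRing.Field.on compositum_field.
HB.instance Definition _ := Falgebra.on compositum_field.
Local Notation LE := compositum_field.

Lemma algid_compositum : algid compositum_aspace = 1.
Proof.
apply/eqP; rewrite algid_eq1 /=.
by rewrite -(rmorph1 phi) -(rmorph1 iota0) emb_in_compositum.
Qed.

Definition to_compositum (x : L0) : LE :=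
  (Subvs (emb_in_compositum x) : subvs_of compositum_aspace).

Fact to_compositum_is_zmod_morphism : zmod_morphism to_compositum.
Proof. by move=> x y; apply/val_inj; rewrite /= !rmorphB. Qed.
HB.instance Definition _ := GRing.isZmodMorphism.Build L0 LE to_compositum
  to_compositum_is_zmod_morphism.

Fact to_compositum_is_monoid_morphism : monoid_morphism to_compositum.
Proof.
split; first by apply/val_inj; rewrite /= !rmorph1 algid_compositum.
by move=> x y; apply/val_inj; rewrite /= !rmorphM.
Qed.
HB.instance Definition _ := GRing.isMonoidMorphism.Build L0 LE to_compositum
  to_compositum_is_monoid_morphism.

Lemma to_compositum_scale (k : K) x :
  to_compositum (k *: x) = (k%:A : M) *: to_compositum x.
Proof. by apply/val_inj; rewrite /= emb_scale. Qed.

Lemma to_compositum_expand x :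
  to_compositum x = \sum_(i < n0) (coord b0 i x)%:A *: to_compositum b0`_i.
Proof.
rewrite {1}(coord_vbasis (memvf x)) raddf_sum; apply: eq_bigr => i _.
exact: to_compositum_scale.
Qed.

Lemma compositum_field_expand (w : LE) :
  w = \sum_(i < n0) coord (map_tuple (fun x => emb x) b0) i (val w)
                      *: to_compositum b0`_i.
Proof.
by apply/val_inj; rewrite {1}(compositum_coord (valP w)) raddf_sum.
Qed.

Lemma compositum_field_span : <<map to_compositum b0>>%VS = fullv.
Proof.
apply/eqP; rewrite eqEsubv subvf; apply/subvP => w _.
rewrite (compositum_field_expand w); apply: memv_suml => i _; apply/memvZ.
by apply/memv_span/map_f/mem_nth; rewrite size_tuple.
Qed.

Lemma dim_compositum_field : \dim {:LE}%VS = n0.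
Proof. by rewrite dimvf; exact: dim_compositum. Qed.

Definition compositum_incl (w : LE) : D := vsval w.
Fact compositum_incl_is_zmod_morphism : zmod_morphism compositum_incl.
Proof. by []. Qed.
HB.instance Definition _ := GRing.isZmodMorphism.Build LE D compositum_incl
  compositum_incl_is_zmod_morphism.
Fact compositum_incl_is_monoid_morphism : monoid_morphism compositum_incl.
Proof. by split => //; rewrite /compositum_incl /= algid_compositum. Qed.
HB.instance Definition _ := GRing.isMonoidMorphism.Build LE D compositum_incl
  compositum_incl_is_monoid_morphism.
Fact compositum_incl_is_scalable : scalable compositum_incl.
Proof. by []. Qed.
HB.instance Definition _ := GRing.isScalable.Build M LE D *:%R compositum_incl
  compositum_incl_is_scalable.

(* L0 and M inside the common field L0 M, viewed as an extension of K. *)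
Local Notation Omega := (baseFieldType LE).

Definition L0_to_base (x : L0) : Omega := to_compositum x.
HB.instance Definition _ := GRing.RMorphism.copy L0_to_base to_compositum.
Fact L0_to_base_scalable : scalable L0_to_base.
Proof.
by move=> k x; rewrite baseField_scaleE /L0_to_base to_compositum_scale.
Qed.
HB.instance Definition _ :=
  GRing.isScalable.Build K L0 Omega *:%R L0_to_base L0_to_base_scalable.

Definition M_to_base (y : M) : Omega := (y%:A : LE).
HB.instance Definition _ := GRing.RMorphism.copy M_to_base (in_alg LE).
Fact M_to_base_scalable : scalable M_to_base.
Proof. by move=> k y; rewrite baseField_scaleE /M_to_base scalerA mulr_algl. Qed.
HB.instance Definition _ :=
  GRing.isScalable.Build K M Omega *:%R M_to_base M_to_base_scalable.

(* L0 /\ M = K: an x in L0 \ K is K-free from 1, so emb x is M-free from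
   emb 1 = 1 and cannot lie in M. *)
Lemma compositum_disjoint :
  forall (x : L0) (y : M), L0_to_base x = M_to_base y -> x \in 1%VS.
Proof.
move=> x y /(congr1 val) /= emb_x; apply: contraT => x_notK.
have free_x1 : free [:: x; 1].
  by rewrite free_cons span_seq1 x_notK seq1_free oner_neq0.
have := emb_free free_x1; rewrite /= free_cons => /andP[/negP []].
rewrite span_seq1 emb_x algid_compositum !rmorph1.
by apply: memvZ; rewrite memv_line.
Qed.
End Compositum.

(* A finite extension E/K with exactly [E : K] automorphisms is Galois: the
   fixed field F of 'Gal(E / K) contains K and has [E : F] = #|'Gal(E / K)|,
   hence F = K. *)
Lemma galois_of_card (F : fieldType) (L : splittingFieldType F)
    (K E : {subfield L}) :
  (K <= E)%VS -> #|'Gal(E / K)%g| = \dim_K E -> galois K E.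
Proof.
move=> sKE card_gal; apply/galois_fixedField/eqP.
set Fx := fixedField _; have sKFx : (K <= Fx)%VS := galois_connection_subv sKE.
have dimFx : \dim_Fx E = \dim_K E.
  by rewrite -card_gal (dim_fixedField 'Gal(E / K)%G).
have dimFx_gt0 : (0 < \dim_Fx E)%N.
  by rewrite -(dim_fixedField 'Gal(E / K)%G) cardG_gt0.
rewrite eq_sym eqEdim sKFx -(leq_pmul2l dimFx_gt0) {2}dimFx.
by rewrite -!dim_sup_field ?capvSl ?leqnn.
Qed.

Section CompositumGalois.
Variables (K : fieldType) (M : fieldExtType K) (D0 : falgType K)
  (L0 : splittingFieldType K) (iota0 : {lrmorphism L0 -> D0})
  (D : falgType M) (phi : {rmorphism D0 -> D}).
Hypothesis phiK : forall (k : K) (x : D0), phi (k *: x) = (k%:A : M) *: phi x.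
Hypothesis D_div : is_division_alg D.

Local Notation LE := (compositum_field iota0 phiK D_div).
Local Notation gE := (to_compositum iota0 phiK D_div).
Let b0 := vbasis {:L0}%VS.
Let n0 := \dim {:L0}%VS.

(* L0 M splits, over M, the product of the images of the minimal polynomials
   of a K-basis of L0: these split over L0 since L0/K is normal, and their
   roots include the images of the basis, which generate L0 M. *)
Lemma compositum_splitting : splitting_field_axiom LE.
Proof.
have /fin_all_exists [r minPoly_split] : forall i : 'I_n0,
    exists r : seq L0, minPoly 1 b0`_i = \prod_(c <- r) ('X - c%:P).
  by move=> i; have [r /eqP ->] := splitting_field_normal 1 b0`_i; exists r.
pose rs := flatten [seq map gE (r i) | i <- enum 'I_n0].
pose p := \prod_(i < n0) map_poly gE (minPoly 1 b0`_i).
have p_split : p = \prod_(z <- rs) ('X - z%:P).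
  rewrite big_flatten /= big_map big_enum /=; apply: eq_bigr => i _.
  rewrite minPoly_split rmorph_prod big_map.
  by apply: eq_bigr => c _; exact: map_polyXsubC.
exists p.
  apply: rpred_prod => i _; apply/polyOverP => j; rewrite coef_map.
  have /vlineP [k ->] := polyOverP (minPolyOver 1 b0`_i) j.
  change (gE (k *: 1) \in 1%VS).
  by rewrite to_compositum_scale rmorph1; apply/memvZ/mem1v.
exists rs; first by rewrite p_split eqpxx.
apply/eqP; rewrite eqEsubv subvf /= -(compositum_field_span iota0 phiK D_div).
apply/span_subvP => _ /mapP [x /(nthP 0) [i lt_i <-] ->].
have lt_i_n0 : (i < n0)%N by rewrite (leq_trans lt_i) // size_tuple.
apply: seqv_sub_adjoin; apply/flattenP.
exists (map gE (r (Ordinal lt_i_n0))); first by apply: map_f; rewrite mem_enum.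
have := rmorph_root gE (root_minPoly 1 b0`_(Ordinal lt_i_n0)).
rewrite minPoly_split rmorph_prod (eq_bigr (fun c => 'X - (gE c)%:P)); last first.
  by move=> c _; exact: map_polyXsubC.
by rewrite -(big_map gE xpredT (fun z => 'X - z%:P)) root_prod_XsubC.
Qed.

HB.instance Definition _ :=
  FieldExt_isSplittingField.Build M LE compositum_splitting.

Hypothesis phiB : basis_of {:D}%VS (map phi (vbasis {:D0}%VS)).

Lemma to_compositum_basis : basis_of {:LE}%VS (map gE b0).
Proof.
rewrite basisEdim compositum_field_span subvv size_map size_tuple.
by rewrite (dim_compositum_field iota0 phiK phiB) leqnn.
Qed.

Lemma lfun_compositum_eq (f g : 'End(LE)) :
  (forall x : L0, f (gE x) = g (gE x)) -> f =1 g.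
Proof.
move=> fg w; rewrite (compositum_field_expand w) !linear_sum.
by apply: eq_bigr => i _; rewrite !linearZ /= fg.
Qed.

Section ExtendAutomorphism.
Variable sigma : gal_of {:L0}%VS.

Definition ext_lfun : 'End(LE) :=
  linfun (sval (linear_of_free (map gE b0) (map (fun x => gE (sigma x)) b0))).

Lemma ext_lfun_basis i : (i < n0)%N -> ext_lfun (gE b0`_i) = gE (sigma b0`_i).
Proof.
move=> lt_i; rewrite lfunE /=; case: linear_of_free => f /= f_map.
have := f_map (basis_free to_compositum_basis); rewrite !size_map => /(_ erefl).
by move=> /(congr1 (nth 0 ^~ i)); rewrite !(nth_map 0) ?size_tuple.
Qed.

Lemma ext_lfun_emb x : ext_lfun (gE x) = gE (sigma x).
Proof.
rewrite to_compositum_expand linear_sum {2}(coord_vbasis (memvf x)).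
rewrite linear_sum raddf_sum; apply: eq_bigr => i _.
by rewrite linearZ /= ext_lfun_basis // linearZ /= to_compositum_scale.
Qed.

(* Multiplicativity is checked on products of images of L0, which span. *)
Lemma ext_lfun_mul u v : ext_lfun (u * v) = ext_lfun u * ext_lfun v.
Proof.
have mul_emb x w : ext_lfun (gE x * w) = ext_lfun (gE x) * ext_lfun w.
  rewrite (compositum_field_expand w) mulr_sumr !linear_sum mulr_sumr.
  apply: eq_bigr => i _; rewrite -scalerAr !linearZ /= -scalerAr -rmorphM.
  by rewrite !ext_lfun_emb !rmorphM.
rewrite (compositum_field_expand u) mulr_suml !linear_sum mulr_suml.
by apply: eq_bigr => i _; rewrite -scalerAl !linearZ /= -scalerAl mul_emb.
Qed.

Lemma ext_lfun_kAut : kAut 1 {:LE}%VS ext_lfun.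
Proof.
rewrite kAutfE; apply/kHom_monoid_morphism; split; last exact: ext_lfun_mul.
by rewrite -(rmorph1 gE) ext_lfun_emb !rmorph1.
Qed.

Definition gal_ext : gal_of {:LE}%VS := s2val (kAut_to_gal ext_lfun_kAut).

Lemma gal_ext_in_Gal : gal_ext \in 'Gal({:LE}%VS / 1%VS)%g.
Proof. by rewrite /gal_ext; case: kAut_to_gal. Qed.

Lemma gal_ext_emb x : gal_ext (gE x) = gE (sigma x).
Proof.
by rewrite /gal_ext; case: kAut_to_gal => g /= _ <-; rewrite ?memvf ?ext_lfun_emb.
Qed.
End ExtendAutomorphism.

(* Extension is a group morphism: both sides agree on the image of L0. *)
Lemma gal_extM : {in 'Gal({:L0}%VS / 1%VS)%g &, {morph gal_ext : s t / s * t}%g}.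
Proof.
move=> s t _ _; apply/eqP/gal_eqP => w _.
apply: (lfun_compositum_eq (f := gal_repr _) (g := gal_repr _)) => x.
by rewrite galM ?memvf // !gal_ext_emb galM ?memvf // !gal_ext_emb.
Qed.

Canonical gal_ext_morphism := Morphism gal_extM.

Lemma gal_ext_injm : ('injm gal_ext_morphism)%g.
Proof.
apply/injmP => s t _ _ /= st; apply/eqP/gal_eqP => a _.
apply: (fmorph_inj gE); transitivity (gal_ext s (gE a)).
  by rewrite gal_ext_emb.
by rewrite st gal_ext_emb.
Qed.

Hypothesis galL0 : galois 1%VS {:L0}%VS.

Lemma card_Gal_L0 : #|'Gal({:L0}%VS / 1%VS)%g| = n0.
Proof. by rewrite -(galois_dim galL0) dimv1 divn1. Qed.

(* Gal(L0/K) embeds into Gal(L0 M / M), whose order is at most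
   [L0 M : M] = [L0 : K]; so the embedding is onto. *)
Lemma gal_ext_img :
  (gal_ext_morphism @* 'Gal({:L0}%VS / 1%VS))%g = 'Gal({:LE}%VS / 1%VS)%g.
Proof.
apply/eqP; rewrite eqEcard; apply/andP; split.
  by apply/subsetP => _ /morphimP [s _ _ ->]; apply: gal_ext_in_Gal.
rewrite (card_injm gal_ext_injm) // card_Gal_L0.
rewrite (dim_fixedField 'Gal({:LE}%VS / 1%VS)%G).
by rewrite (dim_compositum_field iota0 phiK phiB) leq_div.
Qed.

Lemma card_Gal_compositum : #|'Gal({:LE}%VS / 1%VS)%g| = n0.
Proof. by rewrite -gal_ext_img (card_injm gal_ext_injm) // card_Gal_L0. Qed.

Lemma compositum_galois : galois 1%VS {:LE}%VS.
Proof.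
apply: galois_of_card; first exact: sub1v.
rewrite dimv1 divn1 (dim_compositum_field iota0 phiK phiB).
exact: card_Gal_compositum.
Qed.

Lemma compositum_Gal_isog :
  ('Gal({:LE}%VS / 1%VS) \isog 'Gal({:L0}%VS / 1%VS))%g.
Proof.
by have := sub_isog (subxx _) gal_ext_injm; rewrite gal_ext_img isog_sym.
Qed.
End CompositumGalois.

Theorem mainTheorem2 (K : fieldType) (M : fieldExtType K) (G : finGroupType) :
  (exists (D0 : falgType K) (L0 : splittingFieldType K)
          (iota0 : {lrmorphism L0 -> D0})
          (D : falgType M) (phi : {rmorphism D0 -> D})
          (L : splittingFieldType M) (iota : {lrmorphism L -> D}),
     is_central_division_alg D0 /\ is_G_extension L0 G /\
     is_maximal_subfield iota0 /\ is_scalar_extension phi /\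
     is_division_alg D /\ is_G_extension L G /\ is_maximal_subfield iota)
  <->
  (exists (D0 : falgType K) (L0 : splittingFieldType K)
          (iota0 : {lrmorphism L0 -> D0})
          (D : falgType M) (phi : {rmorphism D0 -> D}),
     is_central_division_alg D0 /\ is_G_extension L0 G /\
     is_maximal_subfield iota0 /\ is_scalar_extension phi /\
     is_division_alg D /\
         (* L0 /\ M = K, computed in a common overfield Omega *)
         (exists (Omega : fieldExtType K) (s : {lrmorphism L0 -> Omega})
                 (t : {lrmorphism M -> Omega}),
            forall (x : L0) (y : M), s x = t y -> x \in 1%VS) /\
     (* L0 M (the M-span of the image of L0 in D) is a maximal subfield of D *)
         let E := <<map (fun x => phi (iota0 x)) (vbasis {:L0}%VS)>>%VS in
         [/\ is_aspace E, {in E &, forall u v, u * v = v * u}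
           & ((\dim E) ^ 2)%N = \dim {:D}%VS]).
Proof.
split.
  move=> [D0 [L0 [iota0 [D [phi [_ [_ [D0_cda [L0_G [L0_max
    [[phiK phiB] [D_div _]]]]]]]]]]]].
  exists D0, L0, iota0, D, phi; do 5 (split=> //); split.
    exists (baseFieldType (compositum_field iota0 phiK D_div)).
    exists (L0_to_base iota0 phiK D_div), (M_to_base iota0 phiK D_div).
    exact: compositum_disjoint.
  split; [exact: compositum_is_aspace | exact: compositum_comm |].
  by rewrite (dim_compositum iota0 phiK phiB) L0_max (dim_scalar_ext phiB).
move=> [D0 [L0 [iota0 [D [phi [D0_cda [[galL0 Gal_L0] [L0_max
  [[phiK phiB] [D_div _]]]]]]]]]].
exists D0, L0, iota0, D, phi.
exists _, (compositum_incl (iota0 := iota0) (phiK := phiK) (D_div := D_div)).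
do 5 (split; first by []); split.
  split; first exact: (compositum_galois iota0 phiK D_div phiB galL0).
  apply: isog_trans Gal_L0.
  exact: (compositum_Gal_isog iota0 phiK D_div phiB galL0).
rewrite /is_maximal_subfield (dim_compositum_field iota0 phiK phiB).
by rewrite L0_max (dim_scalar_ext phiB).
Qed.
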